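(* Let $X$ be an $n\times n$ Boolean matrix and define $P_0=X$ and $P_k=P_{k-1}+P_{k-1}^2+P_{k-1}^3$ for $k\ge1$. Then $X^*=I_n+P_{\lceil\log_2 n\rceil}$.
   Context: Boolean matrices have entries in $\{0,1\}$. $+$ is the entrywise OR and the product is the Boolean product. $I_n$ is the $n\times n$ identity matrix. The Kleene closure is $X^*=\sum_{k\ge0}X^k$ with $X^0=I_n$; equivalently, $X^*[x,y]=1$ iff $x=y$ or there is a directed path from $x$ to $y$ in the digraph with adjacency matrix $X$. *)

From mathcomp Require Import all_boot all_algebra.
Set Implicit Arguments. Unset Strict Implicit. Unset Printing Implicit Defensive.

Definition bmx_add n (A B : 'M[bool]_n) : 'M[bool]_n :=
  \matrix_(i, j) (A i j || B i j).
Definition bmx_mul n (A B : 'M[bool]_n) : 'M[bool]_n :=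
  \matrix_(i, j) [exists k, A i k && B k j].
Definition bmx_id n : 'M[bool]_n := \matrix_(i, j) (i == j).

(* Kleene closure X^*: X^*[x,y] = 1 iff x = y or there is a directed path
   from x to y in the digraph with adjacency matrix X, i.e. the reflexive
   transitive closure (mathcomp's connect) of the adjacency relation. *)
Definition bmx_star n (X : 'M[bool]_n) : 'M[bool]_n :=
  \matrix_(i, j) connect (fun a b => X a b) i j.

Fixpoint Pseq n (X : 'M[bool]_n) (k : nat) : 'M[bool]_n :=
  match k with
  | 0 => X
  | k'.+1 => let P := Pseq X k' in
      bmx_add (bmx_add P (bmx_mul P P)) (bmx_mul (bmx_mul P P) P)
  end.

(* A nonempty walk of length at most 3^(k+1) splits into at most three walks of
   length at most 3^k, so P_k relates exactly the pairs joined by a walk of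
   length between 1 and 3^k.  A shortest path between distinct vertices has
   length below n <= 2^(ceil(log_2 n)) <= 3^(ceil(log_2 n)). *)

From mathcomp Require Import all_boot all_algebra.
From mathcomp Require Import zify.

Set Implicit Arguments.
Unset Strict Implicit.
Unset Printing Implicit Defensive.

Lemma connect_short_path (T : finType) (e : rel T) (x y : T) :
  connect e x y -> x != y ->
  exists2 p, path e x p & (last x p = y) /\ 0 < size p < #|T|.
Proof.
move=> /connectP [p xp ->] {y}; case: (shortenP xp) => q xq uq _ neq_x_last.
exists q => //; split=> //; apply/andP; split.
  by case: q {xq uq} neq_x_last => //=; rewrite eqxx.
by have := max_card (mem (x :: q)); rewrite (card_uniqP uq).
Qed.

Lemma path_take_drop (T : Type) (e : rel T) m x p : path e x p ->
  path e (last x (take m p)) (drop m p) /\ last x p = last (last x (take m p)) (drop m p).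
Proof.
move=> xp; split; last by rewrite -last_cat cat_take_drop.
by move: xp; rewrite -{1}(cat_take_drop m p) cat_path => /andP [].
Qed.

Lemma expn2_le_expn3 k : 2 ^ k <= 3 ^ k.
Proof. by elim: k => // k IHk; rewrite !expnS leq_mul. Qed.

Section PseqWalks.

Variables (n : nat) (X : 'M[bool]_n).

Let adj : rel 'I_n := fun a b => X a b.

Lemma PseqS_sub k i j : Pseq X k i j -> Pseq X k.+1 i j.
Proof. by rewrite /= !mxE => ->. Qed.

Lemma PseqS_mul2 k i l j : Pseq X k i l -> Pseq X k l j -> Pseq X k.+1 i j.
Proof.
move=> Pil Plj; rewrite /= !mxE; apply/orP; left; apply/orP; right.
by apply/existsP; exists l; rewrite Pil.
Qed.

Lemma PseqS_mul3 k i l1 l2 j :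
  Pseq X k i l1 -> Pseq X k l1 l2 -> Pseq X k l2 j -> Pseq X k.+1 i j.
Proof.
move=> Pil1 Pl12 Pl2j; rewrite /= !mxE; apply/orP; right.
apply/existsP; exists l2; rewrite Pl2j andbT mxE.
by apply/existsP; exists l1; rewrite Pil1.
Qed.

Lemma Pseq_connect k i j : Pseq X k i j -> connect adj i j.
Proof.
elim: k i j => [|k IHk] i j /=; first exact: connect1.
rewrite !mxE => /orP [/orP [/IHk // | ] | ].
  by move=> /existsP [l /andP [/IHk il /IHk lj]]; apply: connect_trans il lj.
move=> /existsP [l2 /andP [+ /IHk l2j]]; rewrite mxE.
move=> /existsP [l1 /andP [/IHk il1 /IHk l12]].
by apply: connect_trans (connect_trans il1 l12) l2j.
Qed.

Lemma Pseq_path k x p :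
  path adj x p -> 0 < size p <= 3 ^ k -> Pseq X k x (last x p).
Proof.
elim: k x p => [|k IHk] x p; first by case: p => [|y [|z p]] //= /andP [].
set m := 3 ^ k; have m_gt0 : 0 < m by rewrite expn_gt0.
have Pfirst y q : path adj y q -> 0 < size q -> Pseq X k y (last y (take m q)).
  by move=> yq q_gt0; apply: IHk; rewrite ?take_path // size_take_min; lia.
move=> xp /andP [p_gt0 p_le]; rewrite expnS -/m in p_le.
have [p_le_m | m_lt_p] := leqP (size p) m.
  by apply/PseqS_sub; rewrite -(take_oversize p_le_m); apply: Pfirst.
have [yq ->] := path_take_drop m xp; set y := last x (take m p) in yq *.
set q := drop m p in yq *; have size_q : size q = size p - m by rewrite size_drop.
have [q_le_m | m_lt_q] := leqP (size q) m.
  apply: PseqS_mul2 (Pfirst x p xp _) _ => //.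
  by rewrite -(take_oversize q_le_m) Pfirst //; lia.
have [zr ->] := path_take_drop m yq.
apply: PseqS_mul3 (Pfirst x p xp p_gt0) (Pfirst y q yq _) (IHk _ _ zr _).
  by rewrite size_q; lia.
by rewrite size_drop size_q; lia.
Qed.

Lemma bmx_star_Pseq k : n <= 3 ^ k -> bmx_star X = bmx_add (bmx_id n) (Pseq X k).
Proof.
move=> n_le; apply/matrixP => i j; rewrite !mxE.
apply/idP/idP; last by case/orP => [/eqP -> | /Pseq_connect].
have [-> // | neq_ij /connect_short_path] := eqVneq i j.
case/(_ neq_ij) => p ip [<- /andP [p_gt0 p_lt]]; apply/orP; right.
by apply: Pseq_path; rewrite // p_gt0 (leq_trans (ltnW p_lt)) ?card_ord.
Qed.

End PseqWalks.

(* up_log 2 n = ceil(log_2 n) for n >= 1 (smallest e with n <= 2^e). *)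
Theorem mainTheorem11 (n : nat) (X : 'M[bool]_n) :
  bmx_star X = bmx_add (bmx_id n) (Pseq X (up_log 2 n)).
Proof.
by apply: bmx_star_Pseq; apply: leq_trans (up_logP n _) (expn2_le_expn3 _).
Qed.
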